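(* Let $G$ be a transitive permutation group on a finite set $\Omega$ of size $n$, and let $k$ be a positive integer with $k\le\lceil n/2\rceil-1$. Suppose that for every two disjoint subsets $A,B\subseteq\Omega$ of size $k$ there exists $g\in G$ with $A^g=B$. Then $G$ is $k$-homogeneous, i.e. $G$ is transitive on the set of all $k$-subsets of $\Omega$. *)

From mathcomp Require Import all_boot all_fingroup.
Set Implicit Arguments. Unset Strict Implicit. Unset Printing Implicit Defensive.

Definition ksubsets (T : finType) (k : nat) : {set {set T}} :=
  [set A : {set T} | #|A| == k].

Definition khomogeneous (T : finType) (G : {group {perm T}}) (k : nat) : bool :=
  [transitive G, on ksubsets T k | ('P^*)%act].

From mathcomp Require Import all_boot all_fingroup.
From mathcomp Require Import zify.

(* Call two k-subsets adjacent when their union has at most k + 1 points.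
   Since 2k < n, two adjacent k-subsets A and B have a common disjoint
   k-subset C, so B lies in the orbit of A through C.  Exchanging one point
   of A \ B for one of B \ A at a time links any two k-subsets by a chain of
   adjacent ones, hence all k-subsets form one orbit. *)

Lemma exists_subset_card (T : finType) (D : {set T}) (k : nat) :
  k <= #|D| -> exists2 C : {set T}, C \subset D & #|C| = k.
Proof.
elim: k => [|k IHk] le_kD; first by exists set0; rewrite ?sub0set ?cards0.
have [C sCD cardC] := IHk (ltnW le_kD).
have : 0 < #|D :\: C| by rewrite cardsD (setIidPr sCD) cardC subn_gt0.
case/card_gt0P => x /setDP[Dx notCx].
exists (x |: C); first by rewrite subUset sub1set Dx sCD.
by rewrite cardsU1 notCx cardC.
Qed.

Lemma cardsD_sym (T : finType) (A B : {set T}) :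
  #|A| = #|B| -> #|B :\: A| = #|A :\: B|.
Proof. by have := cardsID B A; have := cardsID A B; rewrite setIC; lia. Qed.

Section KsubsetRelation.

Context {T : finType} {k : nat} {e : rel {set T}}.
Hypothesis e_trans : transitive e.

Definition ksubset_adjacent (A B : {set T}) :=
  [/\ #|A| = k, #|B| = k & #|A :|: B| <= k.+1].

Lemma adjacent_of_disjoint :
  k.*2 < #|T| ->
  (forall A B : {set T}, #|A| = k -> #|B| = k -> [disjoint A & B] -> e A B) ->
  forall A B : {set T}, ksubset_adjacent A B -> e A B.
Proof.
move=> lt_2k_T e_disj A B [cardA cardB cardAB].
have : k <= #|~: (A :|: B)| by have := cardsC (A :|: B); lia.
case/exists_subset_card => C sCAB cardC.
have disjC (D : {set T}) : D \subset A :|: B -> [disjoint D & C].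
  move=> sD; rewrite disjoint_sym disjoints_subset.
  by apply: subset_trans sCAB _; rewrite setCS.
apply: (e_trans C); apply: e_disj => //; first by rewrite disjC ?subsetUl.
by rewrite disjoint_sym disjC ?subsetUr.
Qed.

Lemma connect_ksubsets :
  (forall A B : {set T}, ksubset_adjacent A B -> e A B) ->
  forall A B : {set T}, #|A| = k -> #|B| = k -> e A B.
Proof.
move=> e_adj A B cardA cardB.
have [n ltAB] := ubnP #|A :\: B|.
elim: n A ltAB cardA => // n IHn A ltAB cardA.
have [/eqP | /set0Pn[a /setDP[Aa notBa]]] := eqVneq (A :\: B) set0.
  by rewrite setD_eq0 => /setUidPr AB; apply: e_adj; split; rewrite // AB cardB.
have : 0 < #|B :\: A|.
  rewrite cardsD_sym ?cardA ?cardB //.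
  by apply/card_gt0P; exists a; apply/setDP.
case/card_gt0P => b /setDP[Bb notAb].
pose A' := b |: (A :\ a).
have cardA' : #|A'| = k.
  rewrite cardsU1 !inE (negbTE notAb) andbF /= (cardsD1 a A) Aa in cardA *.
  lia.
apply: (e_trans A').
  apply: e_adj; split=> //.
  have sAA' : A :|: A' \subset b |: A.
    by rewrite subUset subsetUr setUS ?subD1set.
  by have := subset_leq_card sAA'; rewrite cardsU1 notAb cardA.
apply: IHn cardA'.
have -> : A' :\: B = (A :\: B) :\ a.
  apply/setP => x; rewrite !inE.
  by case: (eqVneq x b) => [->|_]; rewrite ?Bb ?andbF //= andbCA.
by have := cardsD1 a (A :\: B); rewrite !inE notBa Aa /=; lia.
Qed.

End KsubsetRelation.

Lemma khomogeneous_of_orbits (T : finType) (G : {group {perm T}}) (k : nat) :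
  k <= #|T| ->
  (forall A B : {set T}, #|A| = k -> #|B| = k -> B \in orbit 'P^* G A) ->
  khomogeneous G k.
Proof.
rewrite -cardsT => /exists_subset_card[C _ cardC] same_orbit.
apply/imsetP; exists C; first by rewrite inE cardC.
apply/setP => B; rewrite inE; apply/eqP/idP => [cardB | /orbitP[g _ <-]].
  exact: same_orbit.
by rewrite card_setact.
Qed.

Theorem lemma7p5 (T : finType) (G : {group {perm T}}) (k : nat) :
  [transitive G, on [set: T] | 'P] ->
  0 < k -> k <= uphalf #|T| - 1 ->
  (forall A B : {set T}, #|A| = k -> #|B| = k -> [disjoint A & B] ->
     exists2 g, g \in G & [set g x | x in A] = B) ->
  khomogeneous G k.
Proof.
move=> _ k_gt0 le_k_half disjoint_moved.
have lt_2k_T : k.*2 < #|T|.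
  by rewrite -gtn_uphalf_double; have := uphalf_gt0 #|T|; lia.
pose e : rel {set T} := fun A B => B \in orbit 'P^* G A.
have e_trans : transitive e by move=> B A C /= AB BC; apply: orbit_trans BC AB.
have e_disj (A B : {set T}) : #|A| = k -> #|B| = k -> [disjoint A & B] -> e A B.
  move=> cardA cardB /(disjoint_moved A B cardA cardB)[g Gg <-].
  by apply/orbitP; exists g.
apply: khomogeneous_of_orbits; first lia.
exact: connect_ksubsets e_trans (adjacent_of_disjoint e_trans lt_2k_T e_disj).
Qed.
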